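(* Let $2\le j\le n$ and let $K_j\subset\wedge^j\mathbb{R}^n$ be a proper cone. Then $\widehat{T}(K_j)$, if it is not $\{0\}$, coincides with the union of all $j$-dimensional linear subspaces $L\subset\mathbb{R}^n$ for which the line $\mathcal{A}_j(L)$ is contained in $K_j\cup(-K_j)$. The set $T(K_j)$, if it is nonempty, coincides with the closure of the union of all $j$-dimensional linear subspaces $L\subset\mathbb{R}^n$ for which the nonzero elements of the line $\mathcal{A}_j(L)$ lie in $\operatorname{int}(K_j)\cup\operatorname{int}(-K_j)$.
   Context: A proper cone is a closed convex cone that is pointed and solid. $\wedge^j\mathbb{R}^n$ is the $j$th exterior power of $\mathbb{R}^n$. For a $j$-dimensional subspace $L\subset\mathbb{R}^n$, $\mathcal{A}_j(L)=\{t(x_1\wedge\cdots\wedge x_j):t\in\mathbb{R}\}$ for any basis $x_1,\ldots,x_j$ of $L$ (well defined). $\widehat{T}(K_j)$ is the set of all $x_1\in\mathbb{R}^n$ for which there exist $x_2,\ldots,x_j\in\mathbb{R}^n$ with $x_1\wedge\cdots\wedge x_j\in(K_j\cup(-K_j))\setminus\{0\}$, together with $0$. $T(K_j)$ is the closure of the set of all $x_1\in\mathbb{R}^n$ for which there exist $x_2,\ldots,x_j\in\mathbb{R}^n$ with $x_1\wedge\cdots\wedge x_j\in\operatorname{int}(K_j)\cup\operatorname{int}(-K_j)$. *)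

From HB Require Import structures.
From mathcomp Require Import all_boot all_order all_algebra.
From mathcomp Require Import all_classical all_reals all_analysis.
Set Implicit Arguments. Unset Strict Implicit. Unset Printing Implicit Defensive.
Import Order.TTheory GRing.Theory Num.Theory.
Import numFieldNormedType.Exports.
Local Open Scope classical_set_scope.
Local Open Scope ring_scope.

(* The j-element subsets of {0,...,n-1}: index set of the standard basis
   e_I = e_{i_1} /\ ... /\ e_{i_j} (i_1 < ... < i_j) of the exterior power. *)
Notation jsub n j := {S : {set 'I_n} | #|S| == j}.

(* Concrete model of the j-th exterior power of R^n: coordinate vectors
   indexed by the j-subsets (via enum_rank), dimension C(n,j). *)
Notation ext R n j := 'rV[R]_#|{: jsub n j}|.

(* l-th smallest element of the j-subset S. *)
Definition jcol n j (S : jsub n j) (l : 'I_j) : 'I_n :=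
  enum_val (cast_ord (esym (eqP (valP S))) l).

(* x_1 /\ ... /\ x_j, given by its Pluecker coordinates (j x j minors). *)
Definition wedge (R : realType) n j (x : 'I_j -> 'rV[R]_n) : ext R n j :=
  \row_(i < #|{: jsub n j}|)
     \det (\matrix_(k < j, l < j) x k 0 (jcol (enum_val i) l)).

Definition negset (V : zmodType) (K : set V) : set V := [set v | K (- v)].

Definition proper_cone (R : realType) n j (K : set (ext R n j)) : Prop :=
  closed K /\ K 0 /\
  (forall u v, K u -> K v -> K (u + v)) /\
  (forall (t : R) v, 0 <= t -> K v -> K (t *: v)) /\
  (K `&` negset K = [set 0]) /\
  (interior K !=set0).

Definition That (R : realType) n j (K : set (ext R n j)) : set 'rV[R]_n :=
  [set y | exists (x : 'I_j -> 'rV[R]_n) (i : 'I_j), (i : nat) = 0%N /\ x i = y /\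
            (K `|` negset K) (wedge x) /\ wedge x <> 0] `|` [set 0].

Definition Tset (R : realType) n j (K : set (ext R n j)) : set 'rV[R]_n :=
  closure [set y | exists (x : 'I_j -> 'rV[R]_n) (i : 'I_j), (i : nat) = 0%N /\
            x i = y /\ (interior K `|` interior (negset K)) (wedge x)].

(* A_j(L) for a subspace L of R^n, given as the row space of a square matrix:
   all multiples t (x_1 /\ ... /\ x_j) for a basis x_1..x_j of L. *)
Definition Aj (R : realType) n j (L : 'M[R]_n) : set (ext R n j) :=
  [set v | exists (x : 'I_j -> 'rV[R]_n) (t : R),
     row_free (\matrix_(k < j) x k) /\ (\matrix_(k < j) x k == L)%MS /\
     v = t *: wedge x].

(* Both sets are described through a set C of exterior vectors that is invariant
   under nonzero scalars and avoids 0: C = (K u -K) \ {0} for That, and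
   C = int K u int(-K) for T.  Since x_1 /\ ... /\ x_j <> 0 exactly when the x_k
   are independent (some j x j minor is nonzero), if x_1 /\ ... /\ x_j lies in C
   then the x_k form a basis of a j-space L with A_j(L) \ {0} = R^* (x_1 /\ ... /\ x_j)
   contained in C; conversely, any nonzero y in such an L is the first vector of
   a basis of L (Steinitz exchange).  The point 0 is in That by definition, and in
   the closure of the T-set because that set is a nonempty cone. *)

From HB Require Import structures.
From mathcomp Require Import all_boot all_order all_algebra.
From mathcomp Require Import all_classical all_reals all_analysis.
From mathcomp Require Import perm.
Import Order.TTheory GRing.Theory Num.Theory.
Import numFieldNormedType.Exports.
Local Open Scope classical_set_scope.
Local Open Scope ring_scope.

Set Implicit Arguments.
Unset Strict Implicit.
Unset Printing Implicit Defensive.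

Section Minors.
Variables (F : fieldType) (n j : nat).

Lemma row_free_colsub (g : 'I_j -> 'I_n) (X : 'M[F]_(j, n)) :
  colsub g X \in unitmx -> row_free X.
Proof.
rewrite -row_free_unit -!row_leq_rank => /leq_trans; apply.
by rewrite -[X in colsub _ X]mulmx1 -mulmx_colsub mxrankM_maxl.
Qed.

Lemma row_free_jminor (X : 'M[F]_(j, n)) :
  row_free X -> exists S : jsub n j, colsub (jcol S) X \in unitmx.
Proof.
(* The columns selected by a full-rank choice of rows of X^T, sorted. *)
move=> freeX; have fullXt : row_full X^T by rewrite /row_full mxrank_tr.
pose f := fullrankfun fullXt.
have f_inj : injective f := @fullrankfun_inj _ _ _ _ fullXt.
pose imf := [set f k | k : 'I_j].
have imf_f k : f k \in imf by apply: imset_f.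
have cardS : #|imf| == j by rewrite card_imset ?card_ord.
pose S : jsub n j := exist (fun S : {set 'I_n} => #|S| == j) _ cardS.
pose h k := cast_ord (eqP cardS) (enum_rank_in (imf_f k) (f k)).
have fE : f =1 jcol S \o h.
  by move=> k; rewrite /= /jcol cast_ord_comp cast_ord_id enum_rankK_in.
have h_inj : injective h.
  by move=> k k' /(congr1 (jcol S)); rewrite -[LHS]fE -[RHS]fE => /f_inj.
exists S; rewrite -unitmx_tr trmx_mxsub -row_free_unit.
rewrite -row_leq_rank -(eqmx_rowsub h h_inj (leqnn j) fE).
by rewrite mxrank_fullrowsub.
Qed.

Lemma row_exchange (B : 'M[F]_(j, n)) (y : 'rV_n) (i0 : 'I_j) :
  (y <= B)%MS -> y != 0 ->
  exists x : 'I_j -> 'rV_n, x i0 = y /\ (\matrix_(k < j) x k == B)%MS.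
Proof.
case/submxP => c defy nz_y.
have [i1 nz_ci1] : exists i1, c 0 i1 != 0.
  by apply/rV0Pn; apply: contraNneq nz_y => c0; rewrite defy c0 mul0mx.
pose x k := if k == i0 then y else row (tperm i0 i1 k) B.
exists x; split; first by rewrite /x eqxx.
have tperm_eq0 l : (tperm i0 i1 l == i0) = (l == i1).
  by rewrite -(inj_eq (@perm_inj _ (tperm i0 i1))) tpermK tpermL.
have rowB_sub l : l != i1 -> (row l B <= \matrix_(k < j) x k)%MS.
  move=> ne_l_i1; apply: (eq_row_sub (tperm i0 i1 l)).
  by rewrite rowK /x tperm_eq0 (negPf ne_l_i1) tpermK.
apply/andP; split; apply/row_subP => l.
  rewrite rowK /x; case: ifP => _; last exact: row_sub.
  by rewrite defy submxMl.
have [->|] := eqVneq l i1; last exact: rowB_sub.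
have -> : row i1 B = (c 0 i1)^-1 *: (y - \sum_(l | l != i1) c 0 l *: row l B).
  by rewrite defy mulmx_sum_row (bigD1 i1) //= addrK scalerA mulVf ?scale1r.
rewrite scalemx_sub // addmx_sub ?eqmx_opp ?summx_sub // => [|k ne_k_i1].
  by apply: (eq_row_sub i0); rewrite rowK /x eqxx.
by rewrite scalemx_sub ?rowB_sub.
Qed.

Lemma basis_through p (L : 'M[F]_(p, n)) (y : 'rV_n) (i0 : 'I_j) :
  \rank L = j -> (y <= L)%MS -> y != 0 ->
  exists x : 'I_j -> 'rV_n,
    [/\ x i0 = y, row_free (\matrix_(k < j) x k) & (\matrix_(k < j) x k == L)%MS].
Proof.
move=> rkL yL nz_y.
pose B := castmx (rkL, erefl n) (row_base L).
have defB : (B :=: L)%MS := eqmx_trans (eqmx_cast _ _) (eq_row_base L).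
have yB : (y <= B)%MS by rewrite defB.
have [x [xi0 defX]] := row_exchange i0 yB nz_y.
exists x; split => //; last exact/eqmxP/(eqmx_trans (eqmxP defX) defB).
by rewrite /row_free (eqmx_rank defX) defB rkL.
Qed.

End Minors.

Section Wedge.
Variables (R : realType) (n j : nat).
Implicit Types (x : 'I_j -> 'rV[R]_n) (L : 'M[R]_n).
Local Notation rows x := (\matrix_(k < j) x k).

Lemma wedgeE x i : wedge x 0 i = \det (colsub (jcol (enum_val i)) (rows x)).
Proof. by rewrite mxE; congr (\det _); apply/matrixP => k l; rewrite !mxE. Qed.

Lemma wedge_mulmx x x' (A : 'M[R]_j) :
  rows x' = A *m rows x -> wedge x' = \det A *: wedge x.
Proof.
by move=> defx'; apply/rowP => i; rewrite [RHS]mxE !wedgeE defx' -mulmx_colsub det_mulmx.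
Qed.

Lemma wedge_scale x i0 (t : R) :
  wedge (fun k => if k == i0 then t *: x k else x k) = t *: wedge x.
Proof.
pose d : 'rV[R]_j := \row_k (if k == i0 then t else 1).
rewrite (@wedge_mulmx x _ (diag_mx d)).
  rewrite det_diag (bigD1 i0) //= big1 ?mulr1 ?mxE ?eqxx // => k /negPf ne_k_i0.
  by rewrite mxE ne_k_i0.
apply/matrixP => k l; rewrite mul_diag_mx !mxE.
by case: eqP => _; rewrite ?mul1r ?mxE.
Qed.

Lemma wedge_neq0 x : (wedge x != 0) = row_free (rows x).
Proof.
apply/idP/idP => [/rV0Pn [i]|/row_free_jminor [S]].
  by rewrite wedgeE -unitfE -unitmxE; apply: row_free_colsub.
rewrite unitmxE unitfE => minorS; apply/rV0Pn.
by exists (enum_rank S); rewrite wedgeE enum_rankK.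
Qed.

Lemma Aj_wedge x L : row_free (rows x) -> (rows x == L)%MS -> Aj L (wedge x).
Proof. by move=> freeX defX; exists x, 1; rewrite scale1r. Qed.

Lemma AjP x L v : (rows x == L)%MS -> Aj L v -> exists t : R, v = t *: wedge x.
Proof.
move=> defX [x' [t [_ [defX' ->]]]].
have /submxP [A defA] : (rows x' <= rows x)%MS by rewrite (eqmxP defX') (eqmxP defX).
by exists (t * \det A); rewrite (wedge_mulmx defA) scalerA.
Qed.

End Wedge.

Section Cones.
Variables (R : realFieldType) (V : normedModType R).
Implicit Types (A : set V) (v : V).

Definition pos_cone A := forall (t : R) v, 0 < t -> A v -> A (t *: v).
Definition double_cone A := forall (t : R) v, t != 0 -> A v -> A (t *: v).

Lemma negsetK A : negset (negset A) = A.
Proof. by apply/seteqP; split => v; rewrite /negset /= opprK. Qed.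

Lemma double_cone_setU_negset A : pos_cone A -> double_cone (A `|` negset A).
Proof.
move=> coneA t v nz_t; have [t_gt0|t_le0] := ltP 0 t.
  by case=> Av; [left|right]; rewrite /negset /= -?scalerN; apply: coneA.
have Nt_gt0 : 0 < - t by rewrite oppr_gt0 lt_neqAle nz_t.
case=> Av; [right|left]; rewrite /negset /=.
  by rewrite -scaleNr; apply: coneA.
by rewrite -[t]opprK scaleNr -scalerN; apply: coneA.
Qed.

Lemma double_cone_setD0 A : double_cone A -> double_cone (A `\ 0).
Proof.
move=> coneA t v nz_t [Av nz_v]; split; first exact: coneA.
by move/eqP; rewrite /= scaler_eq0 (negPf nz_t) => /eqP.
Qed.

Lemma negset_interior_sub A : negset (interior A) `<=` interior (negset A).
Proof.
have nz_N1 : (-1 : R) != 0 by rewrite oppr_eq0 oner_eq0.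
move=> v /(nbhsZ nz_N1).
rewrite scaleN1r opprK; apply: filterS => _ [w Aw <-].
by rewrite /negset /= scaleN1r opprK.
Qed.

Lemma interior_negset A : interior (negset A) = negset (interior A).
Proof.
apply/seteqP; split; last exact: negset_interior_sub.
move=> v intNAv; rewrite /negset /= -[A]negsetK; apply: negset_interior_sub.
by rewrite /negset /= opprK.
Qed.

Lemma pos_cone_interior A : pos_cone A -> pos_cone (interior A).
Proof.
move=> coneA t v t_gt0 /(nbhsZ (lt0r_neq0 t_gt0)); apply: filterS.
by move=> _ [w Aw <-]; apply: coneA.
Qed.

Lemma nbhs0_scale_pos (B : set V) v : nbhs 0 B -> exists2 t : R, 0 < t & B (t *: v).
Proof.
move=> /nbhs_normP [e e_gt0 Be]; pose t := e / (`|v| + 1).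
have t_gt0 : 0 < t by rewrite divr_gt0 // ltr_wpDl.
exists t => //; apply: Be; rewrite /= sub0r normrN normrZ gtr0_norm //.
by rewrite mulrAC ltr_pdivrMr ?ltr_wpDl // ltr_pM2l // ltrDl.
Qed.

Lemma closure_pos_cone0 A : pos_cone A -> A !=set0 -> closure A 0.
Proof.
move=> coneA [v Av] B /(nbhs0_scale_pos v) [t t_gt0 Btv].
by exists (t *: v); split => //; apply: coneA.
Qed.

Lemma pointed_interior0 A : A `&` negset A = [set 0] -> (exists v, v != 0) -> ~ interior A 0.
Proof.
move=> pointedA [v nz_v] intA0.
have nbhs0_pointed : nbhs 0 (A `&` negset A).
  apply: filterI => //; apply: negset_interior_sub.
  by rewrite /negset /= oppr0.
have [t t_gt0] := nbhs0_scale_pos v nbhs0_pointed.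
by rewrite pointedA => /eqP; rewrite scaler_eq0 (negPf nz_v) orbF gt_eqF.
Qed.

End Cones.

Lemma setD1_subset (T : Type) (A B : set T) (a : T) :
  B a -> (A `\ a `<=` B `\ a) = (A `<=` B).
Proof.
move=> Ba; rewrite propeqE; split => [AB v Av|AB v [Av ne_va]]; last by split; [apply: AB|].
by have [->|ne_va] := pselect (v = a); [|apply: (AB v (conj Av ne_va)).1].
Qed.

Lemma ext_neq0 (R : nzRingType) n j : (j <= n)%N -> exists v : ext R n j, v != 0.
Proof.
move=> le_jn; pose S := [set widen_ord le_jn k | k : 'I_j].
have widen_inj : injective (widen_ord le_jn) by move=> k k' /(congr1 val) /= /val_inj.
have cardS : #|S| == j by rewrite card_imset ?card_ord.
exists (const_mx 1); apply/rV0Pn.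
exists (enum_rank (exist (fun S : {set 'I_n} => #|S| == j) S cardS)).
by rewrite mxE oner_eq0.
Qed.

Section WedgeLeads.
Variables (R : realType) (n j : nat).
Implicit Types (B C : set (ext R n j)) (L : 'M[R]_n).

(* By conversion, [That K] is [wedge_leads ((K `|` negset K) `\ 0) `|` [set 0]]
   and [Tset K] is [closure (wedge_leads (interior K `|` interior (negset K)))]. *)
Definition wedge_leads C : set 'rV[R]_n :=
  [set y | exists (x : 'I_j -> 'rV[R]_n) (i : 'I_j),
    (i : nat) = 0%N /\ x i = y /\ C (wedge x)].

Definition Aj_union C : set 'rV[R]_n :=
  [set y | exists L, \rank L = j /\ Aj L `\ 0 `<=` C /\ (y <= L)%MS].

Lemma Aj_union0 C : Aj_union C !=set0 -> Aj_union C 0.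
Proof. by move=> [y [L [rkL [AjC _]]]]; exists L; rewrite sub0mx. Qed.

Lemma Aj_union_setD0 B : B 0 ->
  Aj_union (B `\ 0) = [set y | exists L, \rank L = j /\ Aj L `<=` B /\ (y <= L)%MS].
Proof.
move=> B0; apply/seteqP; split => y [L [rkL [AjB yL]]]; exists L; do 2!split => //.
  by rewrite -(setD1_subset _ B0).
by rewrite setD1_subset.
Qed.

Variable C : set (ext R n j).
Hypotheses (coneC : double_cone C) (C0 : ~ C 0) (j_gt0 : (0 < j)%N).

Lemma wedge_leads_sub : wedge_leads C `<=` Aj_union C.
Proof.
move=> y [x [i [_ [<- Cx]]]].
have freeX : row_free (\matrix_(k < j) x k).
  by rewrite -wedge_neq0; apply/eqP => x0; apply: C0; rewrite -x0.
have defX : (\matrix_(k < j) x k == <<\matrix_(k < j) x k>>)%MS.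
  exact/eqmxP/eqmx_sym/genmxE.
exists <<\matrix_(k < j) x k>>%MS; split; first by rewrite mxrank_gen; apply/eqP.
split; last by rewrite genmxE (eq_row_sub i) // rowK.
move=> v [/(AjP defX) [t ->] nz_v]; apply: coneC => //.
by apply: contra_notN nz_v => /eqP ->; rewrite scale0r.
Qed.

Lemma Aj_union_sub : Aj_union C `\ 0 `<=` wedge_leads C.
Proof.
move=> y [[L [rkL [AjC yL]]] /eqP nz_y].
have [x [xi0 freeX defX]] := basis_through (Ordinal j_gt0) rkL yL nz_y.
exists x, (Ordinal j_gt0); do 2!split => //.
by apply: AjC; split; [exact: Aj_wedge | apply/eqP; rewrite wedge_neq0].
Qed.

Lemma double_cone_wedge_leads : double_cone (wedge_leads C).
Proof.
move=> t y nz_t [x [i [i0 [<- Cx]]]].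
exists (fun k => if k == i then t *: x k else x k), i.
by rewrite eqxx wedge_scale; do 2!split => //; apply: coneC.
Qed.

Lemma wedge_leads_setU0 : wedge_leads C !=set0 -> wedge_leads C `|` [set 0] = Aj_union C.
Proof.
move=> [y0 Wy0]; apply/seteqP; split => [y [/wedge_leads_sub //|->]|y Ay].
  by apply: Aj_union0; exists y0; apply: wedge_leads_sub.
have [->|nz_y] := eqVneq y 0; [by right | left].
by apply: Aj_union_sub; split => // /eqP; rewrite (negPf nz_y).
Qed.

Lemma closure_wedge_leads :
  wedge_leads C !=set0 -> closure (wedge_leads C) = closure (Aj_union C).
Proof.
move=> neW; apply/seteqP; split; first exact/closureS/wedge_leads_sub.
rewrite [X in X `<=` _]closureE; apply: smallest_sub; first exact: closed_closure.
move=> y Ay; have [->|nz_y] := eqVneq y 0.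
  apply: closure_pos_cone0 neW => t v /lt0r_neq0; exact: double_cone_wedge_leads.
by apply/subset_closure/Aj_union_sub; split => // /eqP; rewrite (negPf nz_y).
Qed.

End WedgeLeads.

Unset Implicit Arguments.

Theorem lemma3 (R : realType) (n j : nat) (K : set (ext R n j)) :
  (2 <= j)%N -> (j <= n)%N -> proper_cone K ->
  (That K <> [set 0] ->
     That K = [set y | exists L : 'M[R]_n, \rank L = j /\
                 @Aj R n j L `<=` K `|` negset K /\ (y <= L)%MS]) /\
  (Tset K <> set0 ->
     Tset K = closure [set y | exists L : 'M[R]_n, \rank L = j /\
                 @Aj R n j L `\ 0 `<=` interior K `|` interior (negset K) /\ (y <= L)%MS]).
Proof.
move=> j_ge2 le_jn [_ [K0 [_ [scaleK [pointedK _]]]]].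
have j_gt0 : (0 < j)%N by apply: leq_trans j_ge2.
have coneK : pos_cone K by move=> t v /ltW; apply: scaleK.
split => [nontriv_That|nonempty_T].
  rewrite -Aj_union_setD0; last by left.
  pose C := (K `|` negset K) `\ 0.
  change (wedge_leads C `|` [set 0] <> [set 0]) in nontriv_That.
  have coneC : double_cone C := double_cone_setD0 (double_cone_setU_negset coneK).
  have C0 : ~ C 0 by case=> _; apply.
  apply: wedge_leads_setU0 => //.
  by apply/set0P/negP => /eqP W0; apply: nontriv_That; rewrite W0 set0U.
pose C := interior K `|` interior (negset K).
have C0 : ~ C 0.
  have pointed0 := pointed_interior0 pointedK (ext_neq0 R le_jn).
  by rewrite /C interior_negset /negset /= oppr0; case.
have coneC : double_cone C.
  by rewrite /C interior_negset; apply/double_cone_setU_negset/pos_cone_interior.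
change (closure (wedge_leads C) <> set0) in nonempty_T.
apply: closure_wedge_leads => //.
by apply/set0P/negP => /eqP W0; apply: nonempty_T; rewrite W0 closure0.
Qed.
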